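(* For all integers $n\geq 1$ and $1\leq k\leq n$, $$\bigl|\{e\in\mathbf{I}_n(\underline{12}0):\mathrm{zero}(e)=k\}\bigr|=c_{n,k},$$ where the numbers $c_{n,k}$ are defined by $c_{1,1}=1$, $c_{n,0}=0$ for $n\geq1$, and $c_{n,k}=c_{n-1,k-1}+k\sum_{j=k}^{n-1}c_{n-1,j}$ for $n\geq 2$ and $1\leq k\leq n$ (with $c_{n-1,j}=0$ for $j>n-1$).
   Context: An inversion sequence of length $n$ is an integer sequence $e=e_1e_2\ldots e_n$ with $0\leq e_i<i$ for all $i$; the set of these is $\mathbf{I}_n$. A sequence $e$ avoids the vincular pattern $\underline{12}0$ if there are no indices $2\leq i<j\leq n$ with $e_j<e_{i-1}<e_i$; $\mathbf{I}_n(\underline{12}0)$ is the set of $\underline{12}0$-avoiding inversion sequences of length $n$. $\mathrm{zero}(e)$ is the number of entries of $e$ equal to $0$. *)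

From mathcomp Require Import all_boot.
Set Implicit Arguments. Unset Strict Implicit. Unset Printing Implicit Defensive.

(* An inversion sequence of length n is encoded 0-based as e : {ffun 'I_n -> 'I_n}
   where e i stands for e_{i+1}; the condition 0 <= e_{i+1} < i+1 is e i <= i. *)
Definition inv_seq n (e : {ffun 'I_n -> 'I_n}) : bool :=
  [forall i : 'I_n, (e i <= i)%N].

(* avoids the vincular pattern 12_0 (underlined 12): no 2 <= i < j <= n
   (1-based) with e_j < e_{i-1} < e_i.  0-based: positions a = i-2, a+1 = i-1,
   c = j-1 with a+1 < c. *)
Definition avoids_120 n (e : {ffun 'I_n -> 'I_n}) : bool :=
  ~~ [exists a : 'I_n, exists b : 'I_n, exists c : 'I_n,
        [&& (b == a.+1 :> nat), (b < c)%N, (e c < e a)%N & (e a < e b)%N]].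

Definition zero n (e : {ffun 'I_n -> 'I_n}) : nat :=
  #|[set i : 'I_n | (e i == 0 :> nat)]|.

Fixpoint cnk (n k : nat) {struct n} : nat :=
  match n with
  | 0 => 0
  | 1 => (k == 1)
  | (n'.+1) as m =>
      match k with
      | 0 => 0
      | k'.+1 => cnk n' k' + k * \sum_(k <= j < n'.+1) cnk n' j
      end
  end.

From mathcomp Require Import all_boot zify.
Set Implicit Arguments. Unset Strict Implicit. Unset Printing Implicit Defensive.

(* A 12_0-avoider t of length n+1
   with k+1 zeros either has no factor 10 (adjacent entries 1, 0), or the 0 of
   its last factor 10 is preceded by i zeros, 1 <= i <= k.  Avoidance forces
   every 0 after that position to come before every 1, so deleting the first
   entry (resp. the 1 of the last factor 10) and lowering all later entries by
   one can be undone: raise the later entries again, except the first k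
   (resp. k+1) zeros.  For each of these k+1 classes this is a bijection onto
   the avoiders of length n with at least k (resp. k+1) zeros, hence
     c(n+1,k+1) = sum_{j>=k} c(n,j) + k sum_{j>=k+1} c(n,j)
                = c(n,k) + (k+1) sum_{j>=k+1} c(n,j). *)

Local Notation "t `_ j" := (nth 0 t j) : nat_scope.

Lemma count_bij (T1 T2 : eqType) (A : seq T1) (B : seq T2) (P : pred T1) (Q : pred T2)
    (f : T1 -> T2) (g : T2 -> T1) :
  uniq A -> uniq B ->
  (forall x, x \in A -> P x -> f x \in B /\ Q (f x)) ->
  (forall y, y \in B -> Q y -> g y \in A /\ P (g y)) ->
  (forall x, x \in A -> P x -> g (f x) = x) ->
  (forall y, y \in B -> Q y -> f (g y) = y) ->
  count P A = count Q B.
Proof.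
move=> uA uB hf hg hgf hfg; rewrite -!size_filter -(size_map f).
apply/perm_size/uniq_perm; rewrite ?filter_uniq //.
  rewrite map_inj_in_uniq ?filter_uniq // => x y; rewrite !mem_filter.
  by move=> /andP [px ax] /andP [py ay] e; rewrite -(hgf x ax px) e hgf.
move=> y; rewrite mem_filter; apply/mapP/andP => [[x] | [qy yB]].
  by rewrite mem_filter => /andP [px ax] ->; have [] := hf x ax px.
by have [gA pg] := hg y yB qy; exists (g y); rewrite ?mem_filter ?pg ?hfg.
Qed.

Lemma count_split (T : eqType) (s : seq T) (P : pred T) (f : T -> nat) m :
  (forall x, x \in s -> P x -> f x < m) ->
  count P s = \sum_(i < m) count (fun x => P x && (f x == i)) s.
Proof.
elim: s => [|x s IH] hs /=; first by rewrite big1.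
rewrite big_split /= -IH => [|y ys]; last by apply: hs; rewrite inE ys orbT.
congr (_ + _); case: (boolP (P x)) => px /=; last by rewrite big1.
have hx : f x < m by apply: hs; rewrite ?inE ?eqxx.
rewrite (bigD1 (Ordinal hx)) //= eqxx big1 // => i hi.
by case: eqP => // e; case/eqP: hi; apply: val_inj.
Qed.

Definition is_invseq (t : seq nat) := all (fun j => t`_j <= j) (iota 0 (size t)).

Definition avoids120 (t : seq nat) :=
  all (fun a => all (fun c => ~~ (t`_c < t`_a < t`_a.+1)) (iota a.+2 (size t - a.+2)))
      (iota 0 (size t)).

Definition nzeros (t : seq nat) m := count (fun j => t`_j == 0) (iota 0 m).

Definition zeros t := nzeros t (size t).

Definition factor10 (t : seq nat) p := [&& p.+1 < size t, t`_p == 1 & t`_p.+1 == 0].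

Lemma is_invseqP t : reflect (forall j, t`_j <= j) (is_invseq t).
Proof.
apply: (iffP allP) => [H j | H j _]; last exact: H.
by case: (ltnP j (size t)) => hj; [apply: H; rewrite mem_iota | rewrite nth_default].
Qed.

Lemma invseq_nth0 t : is_invseq t -> t`_0 = 0.
Proof. by move=> /is_invseqP /(_ 0); rewrite leqn0 => /eqP. Qed.

Lemma avoids120P t :
  reflect (forall a c, a.+1 < c -> c < size t -> t`_a < t`_a.+1 -> t`_a <= t`_c)
          (avoids120 t).
Proof.
apply: (iffP allP) => H.
  move=> a c hac hc hasc.
  have ha : a \in iota 0 (size t) by rewrite mem_iota; lia.
  have hc' : c \in iota a.+2 (size t - a.+2) by rewrite mem_iota; lia.
  by move: (allP (H a ha) c hc'); rewrite hasc andbT -leqNgt.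
move=> a _; apply/allP => c; rewrite mem_iota => /andP [h1 h2].
by apply/negP => /andP [h3 h4]; have := H a c h1 _ h4; lia.
Qed.

Lemma nzerosS t m : nzeros t m.+1 = nzeros t m + (t`_m == 0).
Proof. by rewrite /nzeros -addn1 iotaD count_cat /= addn0. Qed.

Lemma nzerosD t a b :
  nzeros t (a + b) = nzeros t a + count (fun j => t`_j == 0) (iota a b).
Proof. by rewrite /nzeros iotaD count_cat. Qed.

Lemma leq_nzeros t m m' : m <= m' -> nzeros t m <= nzeros t m'.
Proof. by move=> h; rewrite -(subnKC h) nzerosD leq_addr. Qed.

Lemma eq_nzeros t u m : (forall j, j < m -> t`_j = u`_j) -> nzeros t m = nzeros u m.
Proof. by move=> h; apply: eq_in_count => j; rewrite mem_iota => /andP [_ /h ->]. Qed.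

Lemma nzeros_ub t m : nzeros t m <= m.
Proof. by rewrite -[leqRHS](size_iota 0) count_size. Qed.

Lemma factor10_between t a c : avoids120 t -> a < c -> c < size t ->
  t`_a = 1 -> t`_c = 0 -> exists2 q, a <= q < c & factor10 t q.
Proof.
move=> /avoids120P ht hac; have [d ->] : exists d, c = a + d.+1 by exists (c - a.+1); lia.
elim: d a {hac} => [|d IH] a hc ha hz.
  rewrite addn1 in hc hz.
  by exists a; rewrite /factor10 ?ha ?hz ?hc ?eqxx //; lia.
case E: t`_a.+1 => [|[|x]].
- by exists a; rewrite /factor10 ?ha ?E ?eqxx ?andbT; lia.
- rewrite -addSnnS in hc hz.
  by have [q hq hf] := IH a.+1 hc E hz; exists q => //; lia.
- by have := ht a (a + d.+2) _ hc _; rewrite ha E hz; lia.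
Qed.

(** * Deleting and inserting an entry *)

(* [contract t p] removes entry [p] and lowers every later entry by one; the
   truncated subtraction turns the later 1s into 0s.  [expand t p v K] inserts
   [v] at [p] and raises every later entry by one, except that the zeros of [t]
   among its first [K] zeros stay 0. *)
Definition contract (t : seq nat) p :=
  mkseq (fun j => if j < p then t`_j else t`_j.+1 - 1) (size t).-1.

Definition raise (t : seq nat) K m :=
  if (t`_m == 0) && (nzeros t m < K) then 0 else (t`_m).+1.

Definition expand (t : seq nat) p v K :=
  mkseq (fun j => if j < p then t`_j else if j == p then v else raise t K j.-1) (size t).+1.

Lemma size_contract t p : size (contract t p) = (size t).-1.
Proof. exact: size_mkseq. Qed.

Lemma nth_contract t p j : j < (size t).-1 ->
  (contract t p)`_j = if j < p then t`_j else t`_j.+1 - 1.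
Proof. exact: nth_mkseq. Qed.

Lemma size_expand t p v K : size (expand t p v K) = (size t).+1.
Proof. exact: size_mkseq. Qed.

Lemma nth_expand t p v K j : j < (size t).+1 ->
  (expand t p v K)`_j = if j < p then t`_j else if j == p then v else raise t K j.-1.
Proof. exact: nth_mkseq. Qed.

Lemma nzeros_expand t p v K m : m <= p -> nzeros (expand t p v K) m = nzeros t m.
Proof.
move=> hm; apply: eq_nzeros => j hj.
case: (ltnP j (size t).+1) => hjt; last by rewrite !nth_default ?size_expand //; lia.
by rewrite nth_expand ?(leq_trans hj hm).
Qed.

Lemma is_invseq_contract t p : is_invseq t -> is_invseq (contract t p).
Proof.
move=> /is_invseqP h; apply/is_invseqP => j.
case: (ltnP j (size (contract t p))) => hj; last by rewrite nth_default.
rewrite size_contract in hj; rewrite nth_contract //.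
by case: ifP => _; [exact: h | have := h j.+1; lia].
Qed.

Lemma is_invseq_expand t p v K : is_invseq t -> v <= p -> is_invseq (expand t p v K).
Proof.
move=> /is_invseqP h hv; apply/is_invseqP => j.
case: (ltnP j (size (expand t p v K))) => hj; last by rewrite nth_default.
rewrite size_expand in hj; rewrite nth_expand //.
case: ltnP => hjp; first exact: h.
case: eqP => [-> //|hjp']; rewrite /raise; case: ifP => _ //.
by have := h j.-1; lia.
Qed.

Lemma expandK t p v K : p <= size t -> contract (expand t p v K) p = t.
Proof.
move=> hp; apply: (@eq_from_nth _ 0) => [|j]; rewrite size_contract size_expand //= => hj.
rewrite nth_contract ?size_expand //.
case: ltnP => hjp; first by rewrite nth_expand ?hjp //; lia.
rewrite nth_expand; last lia.
rewrite ltnNge (leq_trans hjp) //= (_ : (j.+1 == p) = false); last lia.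
by rewrite /raise; case: ifP => [/andP [/eqP -> _] | _] //=; rewrite subn1.
Qed.

Lemma nzeros_contract t p d : p.+1 + d <= size t ->
  nzeros (contract t p) (p + d) + (t`_p == 0)
  = nzeros t (p.+1 + d) + count (fun m => t`_m == 1) (iota p.+1 d).
Proof.
elim: d => [|d IH] hd.
  rewrite !addn0 nzerosS /=; congr (_ + _).
  by apply: eq_nzeros => m hm; rewrite nth_contract ?hm //; lia.
rewrite addnS nzerosS -addnAC IH; last lia.
rewrite addnS nzerosS -(addn1 d) iotaD count_cat /= addn0 nth_contract; last lia.
rewrite ltnNge leq_addr /= -addSn.
by case: t`_(p.+1 + d) => [|[|x]] /=; lia.
Qed.

Lemma zeros_contract t p : p < size t -> zeros t <= zeros (contract t p) + (t`_p == 0).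
Proof.
move=> hp; have := @nzeros_contract t p (size t - p.+1).
rewrite /zeros size_contract subnKC // (_ : p + _ = (size t).-1); last lia.
by move/(_ (leqnn _)) ->; rewrite leq_addr.
Qed.

Lemma contractK t p : p < size t -> avoids120 t -> (forall q, p < q -> ~~ factor10 t q) ->
  expand (contract t p) p t`_p (zeros t - (t`_p == 0)) = t.
Proof.
move=> hp ht hq.
have one_then_zero a c : p < a -> a < c -> c < size t -> t`_a = 1 -> t`_c <> 0.
  move=> hpa hac hc ha hz; have [q /andP [haq _] hf] := factor10_between ht hac hc ha hz.
  by have := hq q (leq_trans hpa haq); rewrite hf.
apply: (@eq_from_nth _ 0) => [|j]; rewrite size_expand size_contract; first lia.
move=> hj; rewrite nth_expand ?size_contract //; have {}hj : j < size t by lia.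
case: ltnP => hjp; first by rewrite nth_contract ?hjp //; lia.
case: eqP => [-> //|hne]; have hpj : p < j by lia.
rewrite /raise nth_contract; last lia.
rewrite ltnNge (_ : p <= j.-1) ?prednK //=; try lia.
have Hz : nzeros (contract t p) j.-1 + (t`_p == 0)
          = nzeros t j + count (fun m => t`_m == 1) (iota p.+1 (j.-1 - p)).
  have := @nzeros_contract t p (j.-1 - p).
  have -> : p.+1 + (j.-1 - p) = j by lia.
  by rewrite subnKC; [apply; lia | lia].
have hpz : (t`_p == 0) <= nzeros t j.
  by case: eqP => // hs0; have := leq_nzeros t hpj; rewrite nzerosS hs0 /=; lia.
have := leq_nzeros t hj; rewrite nzerosS.
case E: t`_j => [|[|x]] /= hzs; rewrite ?subn1 //.
- have no_one : count (fun m => t`_m == 1) (iota p.+1 (j.-1 - p)) = 0.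
    apply/eqP; rewrite -leqn0 leqNgt -has_count; apply/hasPn => m.
    by rewrite mem_iota => hm; apply/eqP => h1; apply: (one_then_zero m j) E => //; lia.
  by rewrite ifT // /zeros; lia.
- have no_zero : zeros t = nzeros t j.
    rewrite /zeros -(subnKC (ltnW hj)) nzerosD -[RHS]addn0; congr (_ + _).
    apply/eqP; rewrite -leqn0 leqNgt -has_count; apply/hasPn => m.
    rewrite mem_iota => hm; apply/eqP => hz.
    case: (ltngtP m j) => hmj; first lia.
      by apply: (one_then_zero j m hpj hmj _ E hz); lia.
    by rewrite hmj E in hz.
  by rewrite ifN //= -leqNgt no_zero; lia.
Qed.

Lemma count_kept_zeros t K m d :
  count (fun j => (t`_j == 0) && (nzeros t j < K)) (iota m d) + minn K (nzeros t m)
  = minn K (nzeros t (m + d)).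
Proof.
elim: d => [|d IH]; first by rewrite addn0.
rewrite -(addn1 d) iotaD count_cat /= addn0 -addnAC IH addnA addn1 nzerosS.
by case: eqP => _ /=; lia.
Qed.

Lemma zeros_expand t p v K : p <= size t -> nzeros t p <= K <= zeros t ->
  zeros (expand t p v K) = K + (v == 0).
Proof.
move=> hp /andP [hK1 hK2]; rewrite /zeros size_expand.
have -> : (size t).+1 = p.+1 + (size t - p) by lia.
rewrite nzerosD nzerosS nzeros_expand // (nth_expand _ _ _ (_ : p < _)) ?ltnn ?eqxx; last lia.
have -> : count (fun j => (expand t p v K)`_j == 0) (iota p.+1 (size t - p))
          = count (fun j => (t`_j == 0) && (nzeros t j < K)) (iota p (size t - p)).
  rewrite -[p.+1]add1n iotaDl count_map; apply: eq_in_count => j.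
  rewrite mem_iota -[preim _ _ _]/((expand t p v K)`_j.+1 == 0) => hj.
  rewrite nth_expand; last lia.
  have [-> ->] : (j.+1 < p) = false /\ (j.+1 == p) = false by split; lia.
  by rewrite /raise; case: ifP.
have := count_kept_zeros t K p (size t - p); rewrite subnKC //.
by rewrite /zeros in hK2; lia.
Qed.

Lemma avoids120_contract t p : avoids120 t -> p = 0 \/ p.+1 < size t /\ t`_p.+1 = 0 ->
  avoids120 (contract t p).
Proof.
move=> /avoids120P ht hp; apply/avoids120P => a c hac; rewrite size_contract => hc.
rewrite !nth_contract; try lia.
case: (ltngtP a.+1 p) => hap.
- case: hp => [|[hp1 hp2] hasc]; first lia.
  by have := ht a p.+1 _ hp1 hasc; rewrite hp2; lia.
- rewrite ifF; last lia.
  by move=> h; have := ht a.+1 c.+1 _ _ (_ : t`_a.+1 < t`_a.+2); lia.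
- by subst p; case: hp => [//|[_ ->]].
Qed.

Lemma raise_mono t K m c : avoids120 t -> m.+1 < c -> c < size t ->
  raise t K m < raise t K m.+1 -> raise t K m <= raise t K c.
Proof.
move=> /avoids120P ht hmc hc; rewrite /raise; case: ifP => // hm; case: ifP => // _ hlt.
have : t`_m <= t`_c by apply: ht => //; lia.
case: ifP => [/andP [/eqP -> hzc]|//]; rewrite leqn0 => /eqP htm.
by move: hm; rewrite htm; have := leq_nzeros t (ltnW (ltnW hmc)); lia.
Qed.

Lemma avoids120_expand t p v K : avoids120 t ->
  p = 0 /\ v = 0 \/ [/\ v = 1, p < size t & t`_p = 0] -> avoids120 (expand t p v K).
Proof.
move=> ht hp; have /avoids120P ht' := ht.
apply/avoids120P => a c hac; rewrite size_expand => hc.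
rewrite !nth_expand; try lia.
case: (ltngtP a.+1 p) => hap.
- case: hp => [[hp0 _]|[_ hp1 hp2] hasc]; first lia.
  by have := ht' a p _ hp1 hasc; rewrite hp2; lia.
- have [-> ->] : (c < p) = false /\ (c == p) = false by split; lia.
  case: (ltngtP a p) => hap'; first lia.
    by rewrite -(prednK (leq_ltn_trans _ hap')) //= => /raise_mono; apply=> //; lia.
  by case: hp => [[_ ->] //|[-> _ htp]]; rewrite /raise hap' htp; case: ifP.
- case: hp => [[hp0 _]|[-> _ hp2] h]; first lia.
  by have -> : t`_a = 0 by lia.
Qed.

Lemma expand_factor10_free t p v K q : p < q -> ~~ factor10 (expand t p v K) q.
Proof.
move=> hpq; apply/and3P => [[]]; rewrite size_expand => hq.
rewrite !nth_expand; try lia.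
have [-> -> -> ->] : [/\ (q < p) = false, (q == p) = false, (q.+1 < p) = false
                      & (q.+1 == p) = false] by split; lia.
rewrite /raise /=; case: ifP => [//|hq1]; case: ifP => [/andP [_ hz]|//] /eqP [hq0] _.
move: hq1; rewrite hq0 eqxx /= => /negbT; rewrite -leqNgt.
by have := @leq_nzeros t q.-1 q (leq_pred _); lia.
Qed.

(** * The last factor 10 *)

Definition last10 t := \max_(p < size t | factor10 t p) p.

Definition zeros_before_last10 t := nzeros t (last10 t).

Lemma last10_max t q : last10 t < q -> ~~ factor10 t q.
Proof.
move=> hq; apply/negP => hf; have hqs : q < size t by case/and3P: hf; lia.
have := leq_bigmax_cond (P := fun p : 'I_(size t) => factor10 t p) (F := val) (Ordinal hqs) hf.
by rewrite -/(last10 t) /=; lia.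
Qed.

Lemma factor10_last10 t q : factor10 t q -> factor10 t (last10 t).
Proof.
move=> hf; have hq : q < size t by case/and3P: hf; lia.
by rewrite /last10 (bigmax_eq_arg (Ordinal hq)) //; case: arg_maxnP.
Qed.

Lemma last10_eq t p : factor10 t p -> (forall q, p < q -> ~~ factor10 t q) -> last10 t = p.
Proof.
move=> hf hq; apply/eqP; rewrite eqn_leq; apply/andP; split.
  by apply/bigmax_leqP => i hi; rewrite leqNgt; apply: contraL hi; apply: hq.
have hp : p < size t by case/and3P: hf; lia.
exact: (leq_bigmax_cond (P := fun p : 'I_(size t) => factor10 t p) (F := val) (Ordinal hp) hf).
Qed.

Lemma last10_free t : (forall q, ~~ factor10 t q) -> last10 t = 0.
Proof. by move=> h; apply/eqP; rewrite -leqn0; apply/bigmax_leqP => i; rewrite (negbTE (h i)). Qed.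

Lemma factor10_last10_pos t : 0 < zeros_before_last10 t -> factor10 t (last10 t).
Proof.
apply: contraTT => hf; rewrite /zeros_before_last10 last10_free // => q.
by apply: contra hf; apply: factor10_last10.
Qed.

Lemma last10_expand t p K : p < size t -> t`_p = 0 -> nzeros t p < K ->
  last10 (expand t p 1 K) = p.
Proof.
move=> hp h0 hK; apply: last10_eq => [|q]; last exact: expand_factor10_free.
have e1 : (expand t p 1 K)`_p = 1 by rewrite nth_expand ?ltnn ?eqxx //; lia.
have e2 : (expand t p 1 K)`_p.+1 = 0.
  rewrite nth_expand; last lia.
  by rewrite ltnNge leqnSn (gtn_eqF (ltnSn p)) /= /raise h0 hK.
by rewrite /factor10 size_expand ltnS hp e1 e2.
Qed.

Lemma zeros_before_last10_lt t : 0 < zeros t -> zeros_before_last10 t < zeros t.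
Proof.
move=> hz; case: (posnP (zeros_before_last10 t)) => [-> // | /factor10_last10_pos].
case/and3P => hs _ /eqP h0; rewrite /zeros_before_last10 /zeros.
by have := leq_nzeros t hs; rewrite !nzerosS h0; lia.
Qed.

Lemma zeros_before_last10_eq0 t : t`_0 = 0 ->
  zeros_before_last10 t = 0 <-> forall q, ~~ factor10 t q.
Proof.
move=> h0; split=> [hz q|]; last by rewrite /zeros_before_last10 => /last10_free ->.
apply/negP => /factor10_last10 /and3P [_ /eqP h1 _].
have hl : 0 < last10 t by case: (last10 t) h1 => //; rewrite h0.
by have := leq_nzeros t hl; rewrite nzerosS h0 -/(zeros_before_last10 t) hz.
Qed.

Definition zero_index t i := find (fun m => i < nzeros t m.+1) (iota 0 (size t)).

Lemma find_iota0 (a : pred nat) n p :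
  p < n -> a p -> (forall m, m < p -> ~~ a m) -> find a (iota 0 n) = p.
Proof.
move=> hp hap hm; rewrite -(subnKC (ltnW hp)) iotaD find_cat size_iota.
have -> : has a (iota 0 p) = false by apply/hasPn => m; rewrite mem_iota => /andP [_ /hm].
by rewrite -(subnSK hp) /= hap addn0.
Qed.

Lemma zero_indexE t p i : p < size t -> t`_p = 0 -> nzeros t p = i -> zero_index t i = p.
Proof.
move=> hp h0 hz; apply: find_iota0 => [//||m hm]; first by rewrite nzerosS h0 hz addn1.
by rewrite -leqNgt -hz; apply: leq_nzeros.
Qed.

Lemma zero_index_contract t p : p.+1 < size t -> t`_p.+1 = 0 ->
  zero_index (contract t p) (nzeros t p) = p.
Proof.
move=> hp h0; apply: zero_indexE; first by rewrite size_contract; lia.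
  by rewrite nth_contract ?ltnn ?h0 //; lia.
by apply: eq_nzeros => j hj; rewrite nth_contract ?hj //; lia.
Qed.

Lemma zero_index_spec t i : i < zeros t ->
  [/\ zero_index t i < size t, t`_(zero_index t i) = 0 & nzeros t (zero_index t i) = i].
Proof.
move=> hi; have hs : 0 < size t by move: hi; rewrite /zeros; case: (size t).
have hh : has (fun m => i < nzeros t m.+1) (iota 0 (size t)).
  by apply/hasP; exists (size t).-1; rewrite ?mem_iota ?prednK //; lia.
have hz : zero_index t i < size t by rewrite -[X in _ < X](size_iota 0) -has_find.
have := nth_find 0 hh; rewrite nth_iota // add0n nzerosS -/(zero_index t i) => hlt.
have hle : nzeros t (zero_index t i) <= i.
  case E: (zero_index t i) => [|m] //; have hm : m < zero_index t i by lia.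
  by move: (before_find 0 hm); rewrite nth_iota ?add0n -?leqNgt //; lia.
by split=> //; move: hlt; case: eqP => /= [|_]; lia.
Qed.

(** * Inversion sequences as lists *)

Definition entries n (e : {ffun 'I_n -> 'I_n}) : seq nat := [seq (e i : nat) | i <- enum 'I_n].

Definition invseqs n := map (@entries n) (filter (@inv_seq n) (enum {: {ffun 'I_n -> 'I_n}})).

Lemma size_entries n e : size (@entries n e) = n.
Proof. by rewrite size_map size_enum_ord. Qed.

Lemma nth_entries n e (i : 'I_n) : (@entries n e)`_i = e i.
Proof. by rewrite (nth_map i) ?size_enum_ord // nth_ord_enum. Qed.

Lemma entries_inj n : injective (@entries n).
Proof.
move=> e1 e2 h; apply/ffunP => i; apply: val_inj.
by rewrite /= -!nth_entries h.
Qed.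

Lemma inv_seq_entries n e : @inv_seq n e = is_invseq (entries e).
Proof.
apply/forallP/is_invseqP => h j; last by rewrite -nth_entries.
case: (ltnP j n) => hj; last by rewrite nth_default // size_entries.
by rewrite (nth_entries e (Ordinal hj)).
Qed.

Lemma avoids_120_entries n e : @avoids_120 n e = avoids120 (entries e).
Proof.
apply/idP/avoids120P => [/existsPn h a c hac | h].
  rewrite size_entries => hc hasc.
  have ha : a < n by lia.
  have hb : a.+1 < n by lia.
  move: (h (Ordinal ha)) => /existsPn /(_ (Ordinal hb)) /existsPn /(_ (Ordinal hc)).
  move: hasc; rewrite -(nth_entries e (Ordinal ha)) -(nth_entries e (Ordinal hb)).
  by rewrite -(nth_entries e (Ordinal hc)) /= eqxx hac /= => -> /[!andbT]; rewrite -leqNgt.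
apply/existsPn => a; apply/existsPn => b; apply/existsPn => c.
apply/negP => /and4P [/eqP hb hbc hca hab].
have := h a c; rewrite size_entries -hb; move: hca hab.
by rewrite -!nth_entries; have := ltn_ord c; lia.
Qed.

Lemma zero_entries n e : @zero n e = zeros (entries e).
Proof.
rewrite /zero /zeros /nzeros size_entries cardsE cardE /enum_mem size_filter -enumT.
by rewrite -val_enum_ord count_map; apply: eq_count => i /=; rewrite nth_entries.
Qed.

Lemma mem_invseqs n t : (t \in invseqs n) = (size t == n) && is_invseq t.
Proof.
apply/mapP/andP => [[e] | [/eqP hs /is_invseqP hi]].
  by rewrite mem_filter => /andP [he _] ->; rewrite size_entries -inv_seq_entries he eqxx.
pose e : {ffun 'I_n -> 'I_n} := [ffun i : 'I_n => insubd i t`_i].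
have et : entries e = t.
  apply: (@eq_from_nth _ 0) => [|j]; rewrite size_entries // => hj.
  rewrite (nth_entries e (Ordinal hj)) ffunE val_insubd /=.
  by case: ifP => //; have := hi j; lia.
exists e => //; rewrite mem_filter mem_enum andbT inv_seq_entries et.
exact/is_invseqP.
Qed.

Lemma uniq_invseqs n : uniq (invseqs n).
Proof. by rewrite map_inj_uniq; [rewrite filter_uniq ?enum_uniq | exact: entries_inj]. Qed.

Lemma invseqs_nth0 n t : t \in invseqs n -> t`_0 = 0.
Proof. by rewrite mem_invseqs => /andP [_ /invseq_nth0]. Qed.

(** * The recurrence *)

Definition num_av n k := count (fun t => avoids120 t && (zeros t == k)) (invseqs n).

Definition num_av_ge n k := count (fun t => avoids120 t && (k <= zeros t)) (invseqs n).

Lemma count_last10_class0 n k :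
  count (fun t => avoids120 t && (zeros t == k.+1) && (zeros_before_last10 t == 0))
        (invseqs n.+1)
  = num_av_ge n k.
Proof.
apply: (count_bij (f := contract^~ 0) (g := fun y => expand y 0 0 k)); rewrite ?uniq_invseqs //.
- move=> x hx /andP [/andP [ha /eqP hz] _]; have h0 := invseqs_nth0 hx.
  move: hx; rewrite !mem_invseqs size_contract => /andP [/eqP hs hi].
  rewrite hs eqxx is_invseq_contract ?avoids120_contract //=; last by left.
  by have := @zeros_contract x 0; rewrite h0 hz hs; lia.
- move=> y; rewrite !mem_invseqs size_expand => /andP [/eqP hs hi] /andP [ha hz].
  rewrite hs eqxx is_invseq_expand ?avoids120_expand ?zeros_expand //=; last by left.
  rewrite addn1 eqxx; split=> //; apply/eqP/zeros_before_last10_eq0 => [|[|q]] //.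
    by rewrite /factor10 nth_expand /= ?andbF.
  exact: expand_factor10_free.
- move=> x hx /andP [/andP [ha /eqP hz] /eqP h10]; have h0 := invseqs_nth0 hx.
  have := @contractK x 0; rewrite h0 hz subn1 /=; apply=> //.
    by move: hx; rewrite mem_invseqs => /andP [/eqP ->].
  by move=> q _; apply: (zeros_before_last10_eq0 h0).1.
- by move=> y _ _; rewrite expandK.
Qed.

Lemma count_last10_class n k i : 0 < i <= k ->
  count (fun t => avoids120 t && (zeros t == k.+1) && (zeros_before_last10 t == i))
        (invseqs n.+1)
  = num_av_ge n k.+1.
Proof.
move=> /andP [hi0 hik].
apply: (count_bij (f := fun x => contract x (last10 x))
                  (g := fun y => expand y (zero_index y i) 1 k.+1)); rewrite ?uniq_invseqs //.
- move=> x; rewrite !mem_invseqs size_contract => /andP [/eqP hs hi].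
  move=> /andP [/andP [ha /eqP hz] /eqP hcl].
  have /and3P [hp /eqP h1 /eqP h0] : factor10 x (last10 x).
    by apply: factor10_last10_pos; rewrite hcl.
  rewrite hs eqxx is_invseq_contract ?avoids120_contract //=; last by right.
  by have := @zeros_contract x (last10 x); rewrite h1 hz; lia.
- move=> y; rewrite !mem_invseqs size_expand => /andP [/eqP hs hi] /andP [ha hz].
  have [hq h0 hzq] := @zero_index_spec y i (leq_ltn_trans hik hz).
  have hq0 : 0 < zero_index y i by case: (zero_index y i) hzq => // h; rewrite -h in hi0.
  have hav : avoids120 (expand y (zero_index y i) 1 k.+1).
    by apply: avoids120_expand => //; right.
  have hl : last10 (expand y (zero_index y i) 1 k.+1) = zero_index y i.
    by apply: last10_expand; rewrite ?hzq //; lia.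
  rewrite hs eqxx is_invseq_expand ?zeros_expand ?hzq ?hav //=; try lia.
  by split=> //; rewrite addn0 eqxx /zeros_before_last10 hl nzeros_expand // hzq eqxx.
- move=> x _ /andP [/andP [ha /eqP hz] /eqP hcl].
  have /and3P [hp /eqP h1 /eqP h0] : factor10 x (last10 x).
    by apply: factor10_last10_pos; rewrite hcl.
  rewrite -hcl zero_index_contract //.
  have := @contractK x (last10 x); rewrite h1 hz subn0; apply=> //; first lia.
  by move=> q; apply: last10_max.
- move=> y; rewrite mem_invseqs => /andP [_ _] /andP [_ hz].
  have [hq h0 hzq] := @zero_index_spec y i (leq_ltn_trans hik hz).
  rewrite last10_expand ?hzq; [exact/expandK/ltnW | done | done | lia].
Qed.

Lemma num_av_ge_split n k : num_av_ge n k = num_av n k + num_av_ge n k.+1.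
Proof.
rewrite /num_av_ge /num_av; elim: (invseqs n) => //= t s ->.
by rewrite addnACA; congr (_ + _); case: (avoids120 t) => //=; case: ltngtP.
Qed.

Lemma num_av_ge_eq0 n k : n < k -> num_av_ge n k = 0.
Proof.
move=> hk; apply/eqP; rewrite -leqn0 leqNgt -has_count; apply/hasPn => t.
rewrite mem_invseqs => /andP [/eqP hs _] /=; rewrite negb_and -ltnNge.
by apply/orP; right; apply: leq_ltn_trans hk; rewrite -hs nzeros_ub.
Qed.

Lemma num_av_ge_sum n k : num_av_ge n k = \sum_(k <= j < n.+1) num_av n j.
Proof.
move: {2}(n.+1 - k) (erefl (n.+1 - k)) => d; elim: d k => [|d IH] k hd.
  by rewrite num_av_ge_eq0 ?big_geq //; lia.
by rewrite big_ltn ?(num_av_ge_split n k) ?IH; lia.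
Qed.

Lemma num_avS0 n : num_av n.+1 0 = 0.
Proof.
apply/eqP; rewrite -leqn0 leqNgt -has_count; apply/hasPn => t ht /=.
have := invseqs_nth0 ht; move: ht; rewrite mem_invseqs => /andP [/eqP hs _] h0.
by rewrite negb_and -lt0n /zeros hs; have := @leq_nzeros t 1 n.+1; rewrite nzerosS h0; lia.
Qed.

Lemma num_av0 k : num_av 0 k = (k == 0).
Proof.
rewrite /num_av.
have -> : invseqs 0 = [:: [::]].
  apply/perm_small_eq => //; apply: uniq_perm; rewrite ?uniq_invseqs // => t.
  by rewrite mem_invseqs inE size_eq0; apply/andP/eqP => [[/eqP ->] | ->].
by rewrite /= addn0 eq_sym.
Qed.

Lemma num_avSS n k : num_av n.+1 k.+1 = num_av n k + k.+1 * num_av_ge n k.+1.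
Proof.
rewrite /num_av (@count_split _ _ _ zeros_before_last10 k.+1); last first.
  move=> t _ /andP [_ /eqP hz]; rewrite -ltnS -hz.
  by apply: zeros_before_last10_lt; rewrite hz.
rewrite big_ord_recl /= count_last10_class0.
rewrite (eq_bigr (fun _ => num_av_ge n k.+1)) => [|i _]; last first.
  by apply: count_last10_class; rewrite /bump add1n ltn_ord.
by rewrite sum_nat_const card_ord num_av_ge_split mulSn addnA mulnC.
Qed.

Lemma num_av_cnk n k : num_av n.+1 k = cnk n.+1 k.
Proof.
elim: n k => [|n IH] [|k]; rewrite ?num_avS0 //.
  by rewrite num_avSS num_av0 num_av_ge_eq0 // muln0 addn0.
rewrite num_avSS IH num_av_ge_sum /=.
by congr (_ + _ * _); apply: eq_bigr => j _; exact: IH.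
Qed.

Lemma card_avoiders n k :
  #|[set e : {ffun 'I_n -> 'I_n} | [&& inv_seq e, avoids_120 e & zero e == k]]| = num_av n k.
Proof.
rewrite cardsE cardE /enum_mem size_filter /num_av /invseqs count_map count_filter enumT.
apply: eq_count => e /=; rewrite unfold_in /= avoids_120_entries zero_entries.
by case: (inv_seq e); rewrite /= ?andbT ?andbF.
Qed.

Theorem mainTheorem2 (n k : nat) :
  (1 <= n)%N -> (1 <= k <= n)%N ->
  #|[set e : {ffun 'I_n -> 'I_n} | [&& inv_seq e, avoids_120 e & zero e == k]]|
  = cnk n k.
Proof. by case: n => [//|n] _ _; rewrite card_avoiders num_av_cnk. Qed.
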